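(* Let $\alpha\in(0,1)$ be irrational, let $s_\alpha$ be a Sturmian word of angle $\alpha$, and let $n$ be a positive even integer. For $0\le i\le n$, let $t_i$ be the factor of length $n$ associated with the interval $L_i(n)$. Then $t_i$ is an abelian square if and only if either $\lfloor n\alpha\rfloor$ is even and $L_i(n)\subset[0,\{-n\alpha\})$, or $\lfloor n\alpha\rfloor$ is odd and $L_i(n)\subset[\{-n\alpha\},1)$.
   Context: Alphabet $\{a,b\}$; $\{x\}=x-\lfloor x\rfloor$ is the fractional part. For irrational $\alpha\in(0,1)$ and $\rho\in[0,1)$, the Sturmian word $s_{\alpha,\rho}=c_0c_1c_2\cdots$ is defined by $c_m=b$ if $\{\rho+m\alpha\}\in[0,1-\alpha)$ and $c_m=a$ otherwise (or with the intervals $(0,1-\alpha]$ and $(1-\alpha,1]$ instead); all such words have the same set of factors, and $s_\alpha$ denotes any of them. For $i\ge 0$ let $I_b^{-i}=[\{-i\alpha\},\{-(i+1)\alpha\})$, understood circularly on $[0,1)$ (if the left endpoint exceeds the right one it means $[\{-i\alpha\},1)\cup[0,\{-(i+1)\alpha\})$). For $x\in[0,1)$ let $u_n(x)=d_0\cdots d_{n-1}$ with $d_i=b$ if $x\in I_b^{-i}$ and $d_i=a$ otherwise; the factor of $s_{\alpha,\rho}$ of length $n$ at position $j$ is $u_n(\{\rho+j\alpha\})$. Arranging the $n+2$ points $0,1,\{-\alpha\},\dots,\{-n\alpha\}$ in increasing order partitions $[0,1)$ into $n+1$ half-open intervals $L_0(n),\dots,L_n(n)$ (in increasing order); $u_n$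 is constant on each $L_i(n)$, and its value there is the factor $t_i$ associated with $L_i(n)$; these are exactly the $n+1$ distinct factors of length $n$. An abelian square is a word $v_1v_2$ where $v_1,v_2$ have the same numbers of $a$'s and of $b$'s. *)

From mathcomp Require Import all_boot all_order all_algebra.
From mathcomp Require Import reals.
Set Implicit Arguments. Unset Strict Implicit. Unset Printing Implicit Defensive.
Import Order.TTheory GRing.Theory Num.Theory.
Local Open Scope ring_scope.

Definition letter := bool.
Definition la : letter := false.
Definition lb : letter := true.

Section Sturm.
Variable R : realType.

Definition fracp (x : R) : R := x - (Num.floor x)%:~R.

(* x in I_b^{-i} = [{-i alpha}, {-(i+1) alpha}), understood circularly *)
Definition in_Ib (alpha : R) (i : nat) (x : R) : bool :=
  let l := fracp (- (i%:R * alpha)) in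
  let r := fracp (- (i.+1%:R * alpha)) in
  if l <= r then (l <= x) && (x < r) else (l <= x) || (x < r).

Definition u_n (alpha : R) (n : nat) (x : R) : seq letter :=
  mkseq (fun i => if in_Ib alpha i x then lb else la) n.

Definition pt (alpha : R) (k : nat) : R := fracp (- (k%:R * alpha)).

Definition rank_below (alpha : R) (n : nat) (x : R) : nat :=
  count (fun k => pt alpha k < x) (iota 0 n.+1).

(* [a, b) is the interval L_i(n): a is the (i+1)-th smallest of the points
   0, {-alpha}, ..., {-n alpha}, and b is the next one, or 1 if i = n. *)
Definition is_L (alpha : R) (n i : nat) (a b : R) : Prop :=
  (exists2 k, (k <= n)%N & a = pt alpha k /\ rank_below alpha n a = i) /\
  (if i == n then b = 1
   else exists2 k, (k <= n)%N & b = pt alpha k /\ rank_below alpha n b = i.+1).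

End Sturm.

Definition abelian_square (w : seq letter) : Prop :=
  exists v1 v2, w = v1 ++ v2 /\
    count_mem la v1 = count_mem la v2 /\ count_mem lb v1 = count_mem lb v2.

From mathcomp Require Import all_boot all_order all_algebra.
From mathcomp Require Import reals.
From mathcomp Require Import lra zify.
Import Order.TTheory GRing.Theory Num.Theory.
Set Implicit Arguments. Unset Strict Implicit. Unset Printing Implicit Defensive.
Local Open Scope ring_scope.

(* For 0 <= x < 1 the letter d_i of u_n(x) is a exactly when floor (x + t alpha)
   jumps between t = i and t = i + 1, so a prefix of length k of u_n(x) contains
   floor (x + k alpha) letters a.  With n = 2m, u_n(x) is an abelian square iff
   both halves contain equally many a's, i.e. floor (x + 2m alpha) =
   2 floor (x + m alpha), and since 0 <= x < 1 this happens iff floor (x + n alpha)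
   is even.  As n alpha is not an integer, floor (x + n alpha) = floor (n alpha) + 1
   if {-n alpha} <= x and floor (n alpha) otherwise.  Finally {-n alpha} is one of
   the points defining the partition, so it never lies inside L_i(n): the
   condition on x is the same for all points of L_i(n). *)

Lemma negb_addb_iff (b c : bool) : ~~ (b (+) c) <-> (~~ b /\ ~~ c) \/ (b /\ c).
Proof. by case: b; case: c; intuition. Qed.

Lemma count_gt1 (T : eqType) (P : pred T) (s : seq T) x y : uniq s -> x != y ->
  x \in s -> y \in s -> P x -> P y -> (1 < count P s)%N.
Proof.
move=> us xy xs ys Px Py.
have noI : count (predI (pred1 x) (pred1 y)) s = 0%N.
  rewrite -(count_pred0 s); apply: eq_count => z /=.
  by apply/andP=> -[/eqP zx /eqP zy]; move/eqP: xy; rewrite -zx zy.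
have := count_predUI (pred1 x) (pred1 y) s.
rewrite noI addn0 !count_uniq_mem // xs ys => cU.
apply: (@leq_trans (count (predU (pred1 x) (pred1 y)) s)); first by rewrite cU.
by apply: sub_count => z /orP[] /eqP ->.
Qed.

Lemma count_lt_split {R : realDomainType} {T : Type} (f : T -> R) (s : seq T) a b :
  a <= b -> count (fun k => f k < b) s
  = addn (count (fun k => f k < a) s) (count (fun k => a <= f k < b) s).
Proof.
move=> ab; elim: s => //= k s ->.
have [fa|af] := ltP (f k) a; first by rewrite (lt_le_trans fa ab) /=; lia.
by rewrite /=; lia.
Qed.

Lemma itv_below_iff {R : realDomainType} (a b p x : R) : 0 <= a -> ~ (a < p < b) ->
  a <= x < b -> (forall y, a <= y < b -> 0 <= y < p) <-> x < p.
Proof.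
move=> a0 gap hx; have /andP[ax xb] := hx.
split=> [below | xp y /andP[ay yb]]; first by have /andP[] := below x hx.
have bp : b <= p by rewrite leNgt; apply/negP => pb; apply: gap; rewrite (le_lt_trans ax xp).
by rewrite (le_trans a0 ay) (lt_le_trans yb bp).
Qed.

Lemma itv_above_iff {R : realDomainType} (a b p x : R) : b <= 1 -> ~ (a < p < b) ->
  a <= x < b -> (forall y, a <= y < b -> p <= y < 1) <-> p <= x.
Proof.
move=> b1 gap hx; have /andP[ax xb] := hx.
split=> [above | px y /andP[ay yb]]; first by have /andP[] := above x hx.
have pa : p <= a by rewrite leNgt; apply/negP => ap; apply: gap; rewrite ap (le_lt_trans px xb).
by rewrite (le_trans pa ay) (lt_le_trans yb b1).
Qed.

Section FractionalPart.
Context {R : realType}.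
Implicit Types alpha l s t u x y : R.

Lemma fracp_ge0 y : 0 <= fracp y.
Proof. by rewrite /fracp subr_ge0 floor_le. Qed.

Lemma fracp_lt1 y : fracp y < 1.
Proof. by have := floorD1_gt y; rewrite intrD /fracp; lra. Qed.

Lemma fracpE y (k : int) : k%:~R <= y < k%:~R + 1 -> fracp y = y - k%:~R.
Proof. by move=> hk; rewrite /fracp (floor_def (m := k)) // intrD. Qed.

Lemma fracpDz y (k : int) : fracp (y + k%:~R) = fracp y.
Proof. by rewrite /fracp floorDrz ?intr_int // intrKfloor intrD opprD addrACA subrr addr0. Qed.

Lemma fracpN t : t \isn't a Num.int -> fracp (- t) = 1 - fracp t.
Proof.
move=> tNint; rewrite /fracp floorNceil opprK ceil_floor tNint intrN intrD.
by rewrite [(true : int)%:~R]/=; lra.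
Qed.

Lemma floorD_fracp y x : 0 <= x < 1 ->
  Num.floor (y + x) = Num.floor y + (1 <= fracp y + x).
Proof.
move=> /andP[x0 x1]; apply: floor_def.
have [f0 f1] := (fracp_ge0 y, fracp_lt1 y).
have ey : y = (Num.floor y)%:~R + fracp y by rewrite /fracp addrC subrK.
by have [h|h] := lerP 1 (fracp y + x); rewrite !intrD /=; lra.
Qed.

Lemma floorD_notint t x : t \isn't a Num.int -> 0 <= x < 1 ->
  Num.floor (x + t) = Num.floor t + (fracp (- t) <= x).
Proof. by move=> tNint hx; rewrite addrC floorD_fracp // fracpN // lerBlDl. Qed.

Lemma floor_double x s (j : int) : 0 <= x < 1 ->
  Num.floor (x + (s + s)) = j + j -> Num.floor (x + s) = j.
Proof.
move=> /andP[x0 x1] h; apply: floor_def.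
have := floor_itv (x + (s + s)); rewrite h !intrD -[1%:~R]/(1 : R).
by move=> /andP[lo hi]; apply/andP; split; lra.
Qed.

(* [u, {u + l}) read circularly is the arc of length l starting at u. *)
Lemma circular_itvE u x l : 0 <= u < 1 -> 0 <= x < 1 -> 0 < l < 1 ->
  (if u <= fracp (u + l) then (u <= x) && (x < fracp (u + l))
   else (u <= x) || (x < fracp (u + l))) = (fracp (x - u) < l).
Proof.
move=> /andP[u0 u1] /andP[x0 x1] /andP[l0 l1].
have [ul|ul] := ltP (u + l) 1.
- rewrite (fracpE (k := 0)) ?subr0; last by rewrite add0r; lra.
  rewrite ifT; last by lra.
  have [ux|ux] := leP u x.
  + rewrite (fracpE (k := 0)) ?subr0 /=; last by rewrite add0r; lra.
    by apply/idP/idP => h; lra.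
  + rewrite (fracpE (k := -1)) /=; last by rewrite intrN; lra.
    by apply/esym/negbTE; rewrite -leNgt intrN; lra.
- rewrite (fracpE (k := 1)); last by lra.
  rewrite ifF; last by apply/negbTE; rewrite -ltNge; lra.
  have [ux|ux] := leP u x.
  + by rewrite (fracpE (k := 0)) ?subr0 /=; lra.
  + rewrite (fracpE (k := -1)) /=; last by rewrite intrN; lra.
    by rewrite intrN; apply/idP/idP => h; lra.
Qed.

Lemma irrational_natrM_notint alpha n : reals.irrational alpha -> (0 < n)%N ->
  n%:R * alpha \isn't a Num.int.
Proof.
move=> irr n0; apply/negP; rewrite intrEfloor => /eqP nE; apply: irr.
apply/rationalP; exists (Num.floor (n%:R * alpha)), n.
by rewrite nE mulrAC divff ?mul1r // pnatr_eq0 -lt0n.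
Qed.

End FractionalPart.

Lemma count_la_lb (v : seq letter) : (count_mem la v + count_mem lb v)%N = size v.
Proof. by rewrite -(count_predC (pred1 la) v); congr addn; apply: eq_count => -[]. Qed.

Lemma abelian_squareE (w : seq letter) m : size w = (m + m)%N ->
  abelian_square w <-> count_mem la w = (count_mem la (take m w)).*2.
Proof.
move=> sw; split.
  case=> v1 [v2 [wE [ea eb]]]; rewrite wE in sw *.
  have : size v1 = size v2 by rewrite -!count_la_lb ea eb.
  move: sw; rewrite size_cat => sw s12.
  by rewrite take_size_cat ?count_cat ?ea ?addnn //; lia.
move=> h; exists (take m w), (drop m w); rewrite cat_take_drop.
have ed : count_mem la (drop m w) = count_mem la (take m w).
  move: h; rewrite -{1}(cat_take_drop m w) count_cat -addnn.
  by move=> /eqP; rewrite eqn_add2l => /eqP.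
have sd : size (take m w) = size (drop m w).
  by rewrite size_drop sw addnK size_takel // sw leq_addr.
do 2!split=> //; apply/eqP.
by rewrite -(eqn_add2l (count_mem la (take m w))) count_la_lb -{1}ed count_la_lb sd.
Qed.

Section SturmianFactors.
Context {R : realType}.
Implicit Types alpha a b x y : R.

(* I_b^{-i} is the arc of length 1 - alpha starting at {-i alpha}. *)
Lemma in_IbE alpha i x : 0 < alpha < 1 -> 0 <= x < 1 ->
  in_Ib alpha i x = (fracp (x + i%:R * alpha) < 1 - alpha).
Proof.
move=> /andP[a0 a1] hx; rewrite /in_Ib.
set l := fracp (- (i%:R * alpha)); set F := Num.floor (- (i%:R * alpha)).
have lE : l = - (i%:R * alpha) - F%:~R by [].
have -> : fracp (- (i.+1%:R * alpha)) = fracp (l + (1 - alpha)).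
  rewrite -[RHS](fracpDz _ (F - 1)); congr fracp.
  by rewrite lE intrB -addn1 natrD mulrDl mul1r /=; lra.
rewrite circular_itvE ?fracp_ge0 ?fracp_lt1 //; last by apply/andP; split; lra.
have -> : x - l = x + i%:R * alpha + F%:~R by rewrite lE; lra.
by rewrite fracpDz.
Qed.

Lemma count_la_u_n alpha k x : 0 < alpha < 1 -> 0 <= x < 1 ->
  (count_mem la (u_n alpha k x))%:Z = Num.floor (x + k%:R * alpha).
Proof.
move=> ha hx; have /andP[a0 a1] := ha; have /andP[x0 x1] := hx.
elim: k => [|k IH].
  by rewrite mul0r addr0; apply/esym/floor_def; rewrite /= add0r; lra.
rewrite /u_n mkseqS -cats1 count_cat PoszD -/(u_n _ _ _) IH in_IbE //.
rewrite -addn1 natrD mulrDl mul1r addrA.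
rewrite (floorD_fracp (x + k%:R * alpha)); last by apply/andP; split; lra.
have [h|h] := lerP 1 (fracp (x + k%:R * alpha) + alpha).
  by rewrite ifF //; apply/negbTE; rewrite -leNgt; lra.
by rewrite ifT //; lra.
Qed.

Lemma abelian_square_u_nE alpha m x : 0 < alpha < 1 -> 0 <= x < 1 ->
  abelian_square (u_n alpha (m + m) x) <->
  ~~ odd `|Num.floor (x + (m + m)%:R * alpha)|%N.
Proof.
move=> ha hx; rewrite abelian_squareE ?size_mkseq //.
have -> : take m (u_n alpha (m + m) x) = u_n alpha m x.
  by rewrite /u_n /mkseq -map_take take_iota (minn_idPl (leq_addr m m)).
have cA := count_la_u_n (m + m) ha hx; have cB := count_la_u_n m ha hx.
rewrite -cA /=; split=> [->|evenA]; first by rewrite odd_double.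
set A := count_mem la (u_n alpha (m + m) x) in cA evenA *.
have := floor_double (s := m%:R * alpha) (j := A./2) hx.
rewrite -mulrDl -natrD -cA -cB -PoszD addnn even_halfK // => /(_ erefl) [->].
by rewrite even_halfK.
Qed.

Lemma rank_below_le alpha n y : (rank_below alpha n y <= n.+1)%N.
Proof. by rewrite /rank_below -[n.+1 in X in (_ <= X)%N](size_iota 0) count_size. Qed.

Lemma is_L_bounds alpha n i a b : is_L alpha n i a b -> 0 <= a /\ b <= 1.
Proof.
move=> [[k0 _ [-> _]] Hb]; split; first exact: fracp_ge0.
by case: eqP Hb => [_ ->|_ [k1 _ [-> _]]]; [exact: lexx | exact/ltW/fracp_lt1].
Qed.

(* Two partition points in [a, b) would make rank_below jump by 2 from a to b. *)
Lemma is_L_gap alpha n i a b : is_L alpha n i a b ->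
  forall k, (k <= n)%N -> ~ (a < pt alpha k < b).
Proof.
move=> [[k0 k0n [Ea Ra]] Hb] k kn /andP[ak kb].
have ab := lt_trans ak kb.
have rb : (rank_below alpha n b <= i.+1)%N.
  by case: eqP Hb => [-> _|_ [k1 _ [_ ->]]]; rewrite ?rank_below_le.
move: rb; rewrite /rank_below (count_lt_split (pt alpha) (iota 0 n.+1) (ltW ab)).
rewrite -/(rank_below alpha n a) Ra -[i.+1]addn1 leq_add2l leqNgt => /negP; apply.
apply: (@count_gt1 _ _ _ k0 k); rewrite ?iota_uniq ?mem_iota ?ltnS //=.
- by apply: contraTneq ak => <-; rewrite -Ea ltxx.
- by rewrite -Ea lexx ab.
- by rewrite ltW.
Qed.

End SturmianFactors.

Theorem proposition4 (R : realType) (alpha : R) (n : nat)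
  (Halpha : 0 < alpha < 1) (Hirr : @reals.irrational R alpha)
  (Hn : (0 < n)%N) (Hev : ~~ odd n)
  (i : nat) (Hi : (i <= n)%N) (a b : R) (HL : is_L alpha n i a b)
  (x : R) (Hx : a <= x < b) :
  abelian_square (u_n alpha n x) <->
  ((~~ odd `|Num.floor (n%:R * alpha)|%N /\
      forall y : R, a <= y < b -> 0 <= y < fracp (- (n%:R * alpha)))
   \/
   (odd `|Num.floor (n%:R * alpha)|%N /\
      forall y : R, a <= y < b -> fracp (- (n%:R * alpha)) <= y < 1)).
Proof.
have [a0 b1] := is_L_bounds HL.
have gap := is_L_gap HL (leqnn n).
have hx : 0 <= x < 1.
  by have /andP[ax xb] := Hx; rewrite (le_trans a0 ax) (lt_le_trans xb b1).
rewrite (itv_below_iff a0 gap Hx) (itv_above_iff b1 gap Hx).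
have [N nE] : exists N : nat, Num.floor (n%:R * alpha) = N.
  exists `|Num.floor (n%:R * alpha)|%N; rewrite gez0_abs // floor_ge0.
  by rewrite mulr_ge0 ?ler0n // ltW; case/andP: Halpha.
rewrite -(even_halfK Hev) -addnn abelian_square_u_nE // addnn even_halfK //.
rewrite floorD_notint ?irrational_natrM_notint // nE -PoszD /= oddD.
by rewrite oddb -/(pt alpha n) ltNge; apply: negb_addb_iff.
Qed.
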